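(* In the setting of the context, the map $\mathscr H$ defined on $\mathscr P_1^C$ by \[ (\mathscr H\eta)_{r'}=\sum_{r\in C}\frac{\pi_rQ_{r,r'}}{\pi_{r'}}(f_r)_*\eta_r\qquad(r'\in C) \] maps $\mathscr P_1^C$ into $\mathscr P_1^C$ and satisfies $\mathcal W(\mathscr H\eta,\mathscr H\zeta)\le\rho\,\mathcal W(\eta,\zeta)$ for all $\eta,\zeta\in\mathscr P_1^C$.
   Context: Setting (construction of the paper): $X$ finite, $P$ irreducible row-stochastic, $\Sigma=\{x\in X^{\mathbb N_0}:P_{x_nx_{n+1}}>0\}$, $\{A_i\}_{i\in X}\subset\mathrm{GL}_2(\mathbb R)$ projectively uniformly hyperbolic w.r.t. $\Sigma$ (on $\widehat\Sigma=\{(x_n)_{n\in\mathbb Z}:P_{x_nx_{n+1}}>0\}$ there is a continuous invariant splitting $\mathbb R^2=E^d\oplus E^w$ into lines, $A_{x_0}E^*(\hat x)=E^*(\widehat\sigma\hat x)$, with $\|A_{x_{n-1}}\cdots A_{x_0}|_{E^w}\|<\|A_{x_{n-1}}\cdots A_{x_0}|_{E^d}\|$ for some $n$). A multicone $\{M_i\}$ is fixed (non-empty proper finite unions of open intervals in $\mathbb{RP}^1$, $\overline{[A_j](M_i)}\subset M_j$ when $P_{ij}>0$), with components $M_{i,a}$; $\beta(i,a,j)$ the unique $b$ with $[A_j](\overline{M_{i,a}})\subset M_{j,b}$; $R=\{((i,a),(j,b)):P_{ij}>0,\ b=\beta(i,a,j)\}$, $s(r)=(i,a)$, $t(r)=(j,b)$,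 $\tau(r)=j$; $Q_{r,r'}=P_{\tau(r)\tau(r')}$ if $t(r)=s(r')$ else $0$; $C$ a fixed recurrent class. $L_{i,a}\in\mathrm{GL}_2(\mathbb R)$ maps the projective non-negative cone onto $\overline{M_{i,a}}$; $B_r=\pm L_{t(r)}^{-1}A_{\tau(r)}L_{s(r)}$, sign chosen so $B_r$ is entrywise positive. If the period $d$ of $Q|_C$ exceeds $1$, $C,Q,B$ are replaced by the $d$-step system on words $(c_0,\dots,c_{d-1})$ through the cyclic classes ($Q_{c,c'}=Q_{c_{d-1}c'_0}Q_{c'_0c'_1}\cdots Q_{c'_{d-2}c'_{d-1}}$, $B_c=B_{c_{d-1}}\cdots B_{c_0}$), keeping names; then $Q|_C$ is irreducible and aperiodic with stationary vector $\pi$, $\pi_r>0$. For $B_r=\begin{pmatrix}a_r&b_r\\c_r&d_r\end{pmatrix}$, $f_r(x)=\frac{(a_r-b_r-c_r+d_r)x+(a_r+b_r-c_r-d_r)}{(a_r-b_r+c_r-d_r)x+(a_r+b_r+c_r+d_r)}$, and $0<\rho<1$ is fixed with $f_r([-1,1])\subset[-\rho,\rho]$ for all $r\in C$. Metrics: $d_{\mathrm{hyp}}(x,y)=2|\mathrm{artanh}\,x-\mathrm{artanh}\,y|$ on $(-1,1)$; $\mathscr P_1(-1,1)$ is the set of Borel probability measures $\nu$ on $(-1,1)$ with $\int d_{\mathrm{hyp}}(x,0)\,d\nu<\infty$; $W_1(\nu_1,\nu_2)=\inf_\eta\int d_{\mathrm{hyp}}(x,y)\,d\eta(x,y)$ over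 couplings $\eta$ of $\nu_1,\nu_2$; $\mathscr P_1^C=\prod_{r\in C}\mathscr P_1(-1,1)$ with metric $\mathcal W(\eta,\zeta)=\sum_{r\in C}\pi_rW_1(\eta_r,\zeta_r)$. *)

From HB Require Import structures.
From mathcomp Require Import all_boot all_order all_algebra.
From mathcomp Require Import all_classical all_reals all_analysis.
Set Implicit Arguments. Unset Strict Implicit. Unset Printing Implicit Defensive.
Import Order.TTheory GRing.Theory Num.Theory.
Local Open Scope classical_set_scope.
Local Open Scope ring_scope.

Section Defs.
Variable R : realType.

Definition artanh (x : R) : R := 2^-1 * ln ((1 + x) / (1 - x)).

Definition dhyp (x y : R) : R := 2 * `|artanh x - artanh y|.

Definition Iopen : set R := `](-1), 1[.

(* P_1(-1,1): Borel probability measures on R carried by (-1,1)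
   with finite first hyperbolic moment *)
Definition P1 (nu : probability R R) : Prop :=
  nu Iopen = 1%E /\ (\int[nu]_x (dhyp x 0)%:E < +oo)%E.

Definition coupling (nu1 nu2 : probability R R)
    (g : probability (R * R)%type R) : Prop :=
  (forall A : set R, measurable A -> g (fst @^-1` A) = nu1 A) /\
  (forall A : set R, measurable A -> g (snd @^-1` A) = nu2 A).

Definition W1 (nu1 nu2 : probability R R) : \bar R :=
  ereal_inf [set (\int[g]_z (dhyp z.1 z.2)%:E)%E
            | g in [set g : probability (R * R)%type R | coupling nu1 nu2 g]].

Definition fmob (B : 'M[R]_2) (x : R) : R :=
  let a := B 0 0 in let b := B 0 1 in let c := B 1 0 in let d := B 1 1 in
  ((a - b - c + d) * x + (a + b - c - d)) /
  ((a - b + c - d) * x + (a + b + c + d)).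

Variable C : finType.

Fixpoint kpow (Q : C -> C -> R) (n : nat) : C -> C -> R :=
  match n with
  | 0 => fun r r' => if r == r' then 1 else 0
  | n.+1 => fun r r' => \sum_(s : C) kpow Q n r s * Q s r'
  end.

Definition P1C (eta : C -> probability R R) : Prop := forall r, P1 (eta r).

Definition Wc (pi : C -> R) (eta zeta : C -> probability R R) : \bar R :=
  (\sum_(r : C) (pi r)%:E * W1 (eta r) (zeta r))%E.

Definition Hset (pi : C -> R) (Q : C -> C -> R) (B : C -> 'M[R]_2)
    (eta : C -> probability R R) (r' : C) : set R -> \bar R :=
  fun A => (\sum_(r : C) (pi r * Q r r' / pi r')%:E * eta r (fmob (B r) @^-1` A))%E.

End Defs.

From HB Require Import structures.
From mathcomp Require Import all_boot all_order all_algebra.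
From mathcomp Require Import all_classical all_reals all_analysis.
From mathcomp Require Import ring lra measurable_realfun.
Import Order.TTheory GRing.Theory Num.Theory.
Import numFieldNormedType.Exports.
Local Open Scope classical_set_scope.
Local Open Scope ring_scope.

(* In the coordinate [t = 2 artanh x = ln ((1 + x) / (1 - x))] the metric [dhyp] is the
   Euclidean distance and [fmob B] becomes [t |-> ln (a e^t + b) - ln (c e^t + d)], whose
   derivative [a e^t / (a e^t + b) - c e^t / (c e^t + d)] is at most [rho] in absolute value
   because [fmob B (1)] and [fmob B (-1)] lie in [[-rho, rho]], i.e. [|a - c| <= rho (a + c)]
   and [|b - d| <= rho (b + d)]. So every [f_r] is a [rho]-contraction of [dhyp] mapping
   [(-1, 1)] into [[-rho, rho]], and [(f_r)_*] preserves finite first moments.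
   By stationarity of [pi] the weights [pi_r Q_{r r'} / pi_{r'}] form a probability vector,
   so [(H eta)_{r'}] is a mixture of probabilities. Mixing the push-forwards of
   near-optimal couplings of [(eta_r, zeta_r)] under [f_r x f_r] with the same weights
   couples [(H eta)_{r'}] and [(H zeta)_{r'}]; averaging against [pi] and using
   [sum_{r'} Q_{r r'} = 1] gives [W(H eta, H zeta) <= rho W(eta, zeta)]. *)

Section cone_contraction.
Context {R : realType}.
Implicit Types a b c d rho : R.

Lemma det_le_cone a b c d rho : 0 < a -> 0 < b -> 0 < c -> 0 < d -> 0 < rho -> rho <= 1 ->
  `|a - c| <= rho * (a + c) -> `|b - d| <= rho * (b + d) ->
  a * d - b * c <= rho * ((a + b) * (c + d)).
Proof.
move=> a0 b0 c0 d0 r0 r1 hac hbd.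
have [adbc|bcad] := lerP (a * d) (b * c).
  have : 0 <= rho * ((a + b) * (c + d)) by rewrite !mulr_ge0 ?addr_ge0 ?ltW.
  lra.
have hca : (1 - rho) * a <= (1 + rho) * c by have := ler_norm (a - c); lra.
have hdb : (1 - rho) * d <= (1 + rho) * b.
  by have := ler_norm (d - b); rewrite distrC in hbd; lra.
set M := (1 - rho) * a * d - (1 + rho) * b * c.
rewrite -subr_ge0.
have -> : rho * ((a + b) * (c + d)) - (a * d - b * c) =
          rho * a * c + rho * b * d - M by rewrite /M; ring.
(* [M <= 2 rho sqrt(abcd) <= rho (ac + bd)] by AM-GM; the identity [E] avoids square roots. *)
have Msq : M ^+ 2 <= 4 * rho ^+ 2 * (a * b * c * d).
  rewrite -subr_ge0.
  have -> : 4 * rho ^+ 2 * (a * b * c * d) - M ^+ 2 =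
    ((1 + rho) * c * ((1 + rho) * b) - (1 - rho) * a * ((1 - rho) * d))
    * (a * d - b * c) by rewrite /M; ring.
  apply: mulr_ge0; last by rewrite subr_ge0 ltW.
  by rewrite subr_ge0 ler_pM // mulr_ge0 //; lra.
have E : 4 * rho * a * c * (rho * a * c + rho * b * d - M) =
  (2 * rho * a * c - M) ^+ 2 + (4 * rho ^+ 2 * (a * b * c * d) - M ^+ 2) by ring.
have : 0 <= 4 * rho * a * c * (rho * a * c + rho * b * d - M).
  by rewrite E addr_ge0 ?sqr_ge0 // subr_ge0.
by rewrite pmulr_rge0 // !mulr_gt0.
Qed.

Lemma frac_dist_le_cone a b c d rho : 0 < a -> 0 < b -> 0 < c -> 0 < d -> 0 < rho -> rho <= 1 ->
  `|a - c| <= rho * (a + c) -> `|b - d| <= rho * (b + d) ->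
  `|a / (a + b) - c / (c + d)| <= rho.
Proof.
move=> a0 b0 c0 d0 r0 r1 hac hbd.
have ab0 : 0 < a + b by rewrite addr_gt0.
have cd0 : 0 < c + d by rewrite addr_gt0.
have -> : a / (a + b) - c / (c + d) = (a * d - b * c) / ((a + b) * (c + d)).
  by field; rewrite !gt_eqF.
rewrite normf_div (gtr0_norm (mulr_gt0 ab0 cd0)) ler_pdivrMr ?mulr_gt0 // ler_norml.
rewrite det_le_cone // andbT lerNl opprB.
rewrite distrC (addrC a) in hac; rewrite distrC (addrC b) in hbd.
have := det_le_cone c d a b rho c0 d0 a0 b0 r0 r1 hac hbd.
by rewrite [(c + d) * _]mulrC [c * b]mulrC [d * a]mulrC.
Qed.

End cone_contraction.

Section log_moebius.
Context {R : realType} (a b c d : R).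
Hypotheses (a0 : 0 < a) (b0 : 0 < b) (c0 : 0 < c) (d0 : 0 < d).

Definition logmob (t : R) : R := ln (a * expR t + b) - ln (c * expR t + d).

Lemma is_derive_logmob (t : R) : is_derive t 1 logmob
  (a * expR t / (a * expR t + b) - c * expR t / (c * expR t + d)).
Proof.
have is_derive_ln_affine (p q : R) : 0 < p -> 0 < q ->
    is_derive t (1 : R) (@ln R \o (fun s => p * expR s + q)) (p * expR t / (p * expR t + q)).
  move=> p0 q0; have pq0 : 0 < p * expR t + q by rewrite addr_gt0 ?mulr_gt0 ?expR_gt0.
  have : is_derive t (1 : R) (fun s => p * expR s + q) (p * expR t).
    by apply: is_derive_eq; rewrite addr0.
  move=> h; rewrite [_ / _]mulrC.
  exact: (@is_derive1_comp _ _ (fun s => p * expR s + q) _ _ _ (is_derive1_ln pq0) h).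
exact: is_deriveB (is_derive_ln_affine _ _ a0 b0) (is_derive_ln_affine _ _ c0 d0).
Qed.

Variable rho : R.
Hypotheses (rho0 : 0 < rho) (rho1 : rho <= 1).
Hypotheses (hac : `|a - c| <= rho * (a + c)) (hbd : `|b - d| <= rho * (b + d)).

Lemma logmob_lipschitz (s t : R) : `|logmob s - logmob t| <= rho * `|s - t|.
Proof.
wlog lt_st : s t / s < t.
  move=> H; have [/H//|/H|->] := ltgtP s t; last by rewrite !subrr normr0 mulr0.
  by rewrite distrC [`|s - t|]distrC.
have derive_bound (u : R) : `|a * expR u / (a * expR u + b) - c * expR u / (c * expR u + d)| <= rho.
  have eu := expR_gt0 u.
  apply: frac_dist_le_cone; rewrite ?mulr_gt0 //.
  by rewrite -mulrBl -mulrDl normrM (gtr0_norm eu) mulrA ler_wpM2r // ltW.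
have cont : {within `[s, t], continuous logmob}.
  by apply: derivable_within_continuous => u _; apply: ex_derive; exact: is_derive_logmob.
rewrite distrC [`|s - t|]distrC.
have [u _ ->] := MVT lt_st (fun u _ => is_derive_logmob u) cont.
by rewrite normrM ler_wpM2r.
Qed.

End log_moebius.

Section moebius_hyperbolic.
Context {R : realType}.

Lemma dhyp_ge0 (x y : R) : 0 <= dhyp x y.
Proof. by rewrite /dhyp mulr_ge0. Qed.

Lemma dhypE (x y : R) :
  dhyp x y = `|ln ((1 + x) / (1 - x)) - ln ((1 + y) / (1 - y))|.
Proof.
rewrite /dhyp /artanh -mulrBr normrM [`|2^-1|]ger0_norm ?invr_ge0 //.
by rewrite mulrA divff ?mul1r // pnatr_eq0.
Qed.

Lemma dhyp0_le (rho y : R) : rho < 1 -> -rho <= y <= rho ->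
  dhyp y 0 <= ln ((1 + rho) / (1 - rho)).
Proof.
move=> r1 /andP[y1 y2].
rewrite dhypE subr0 addr0 divr1 ln1 subr0.
have y0 : 0 < (1 + y) / (1 - y) by rewrite divr_gt0 //; lra.
have K0 : 0 < (1 + rho) / (1 - rho) by rewrite divr_gt0 //; lra.
rewrite ler_norml; apply/andP; split.
  rewrite -lnV ?posrE // ler_ln ?posrE ?invr_gt0 // invf_div.
  rewrite ler_pdivrMr; last lra.
  by rewrite mulrAC ler_pdivlMr; [nra|lra].
rewrite ler_ln ?posrE // ler_pdivrMr; last lra.
by rewrite mulrAC ler_pdivlMr; [nra|lra].
Qed.

Section positive_matrix.
Variable B : 'M[R]_2.
Hypothesis B_gt0 : forall i j, 0 < B i j.
Local Notation a := (B 0 0).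
Local Notation b := (B 0 1).
Local Notation c := (B 1 0).
Local Notation d := (B 1 1).

Lemma fmob1 : fmob B 1 = (a - c) / (a + c).
Proof.
rewrite /fmob !mulr1.
have -> : a - b - c + d + (a + b - c - d) = 2 * (a - c) by ring.
have -> : a - b + c - d + (a + b + c + d) = 2 * (a + c) by ring.
by rewrite -mulf_div divff ?mul1r ?pnatr_eq0.
Qed.

Lemma fmobN1 : fmob B (-1) = (b - d) / (b + d).
Proof.
rewrite /fmob !mulrN1.
have -> : - (a - b - c + d) + (a + b - c - d) = 2 * (b - d) by ring.
have -> : - (a - b + c - d) + (a + b + c + d) = 2 * (b + d) by ring.
by rewrite -mulf_div divff ?mul1r ?pnatr_eq0.
Qed.

Lemma fmob_ratio (x : R) : -1 < x < 1 ->
  let u := (1 + x) / (1 - x) in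
  (1 + fmob B x) / (1 - fmob B x) = (a * u + b) / (c * u + d).
Proof.
move=> /andP[x1 x2] u.
have a0 := B_gt0 0 0; have b0 := B_gt0 0 1.
have c0 := B_gt0 1 0; have d0 := B_gt0 1 1.
have den_gt0 : 0 < (a - b + c - d) * x + (a + b + c + d).
  have -> : (a - b + c - d) * x + (a + b + c + d) = (a + c) * (1 + x) + (b + d) * (1 - x) by ring.
  by apply: addr_gt0; apply: mulr_gt0; lra.
have cd_gt0 : 0 < c * (1 + x) + d * (1 - x) by apply: addr_gt0; apply: mulr_gt0; lra.
rewrite /fmob /u; field.
have -> : (a - b + c - d) * x + (a + b + c + d) - ((a - b - c + d) * x + (a + b - c - d)) =
          2 * (c * (1 + x) + d * (1 - x)) by ring.
by rewrite !gt_eqF ?mulr_gt0 //; lra.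
Qed.

Lemma dhyp_fmob_le (rho x y : R) : 0 < rho -> rho <= 1 ->
  (forall z, -1 <= z <= 1 -> -rho <= fmob B z <= rho) ->
  -1 < x < 1 -> -1 < y < 1 -> dhyp (fmob B x) (fmob B y) <= rho * dhyp x y.
Proof.
move=> rho0 rho1 Hf hx hy.
have a0 := B_gt0 0 0; have b0 := B_gt0 0 1.
have c0 := B_gt0 1 0; have d0 := B_gt0 1 1.
have cone (p q : R) (f : R) : 0 < p -> 0 < q -> f = (p - q) / (p + q) ->
    -rho <= f <= rho -> `|p - q| <= rho * (p + q).
  move=> p0 q0 -> /=; rewrite -ler_norml normf_div (gtr0_norm (addr_gt0 p0 q0)).
  by rewrite ler_pdivrMr ?addr_gt0.
have hac := cone _ _ _ a0 c0 fmob1 (Hf 1 ltac:(lra)).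
have hbd := cone _ _ _ b0 d0 fmobN1 (Hf (-1) ltac:(lra)).
have lnE (u : R) : 0 < u -> ln ((a * u + b) / (c * u + d)) = logmob a b c d (ln u).
  by move=> u0; rewrite /logmob lnK ?posrE // ln_div // posrE addr_gt0 // mulr_gt0.
have ratio_gt0 (z : R) : -1 < z < 1 -> 0 < (1 + z) / (1 - z).
  by case/andP => ? ?; rewrite divr_gt0 //; lra.
rewrite !dhypE (fmob_ratio x hx) (fmob_ratio y hy) !lnE ?ratio_gt0 //.
exact: logmob_lipschitz.
Qed.

End positive_matrix.
End moebius_hyperbolic.

Section measurability.
Context {R : realType}.

Lemma measurable_inv : measurable_fun [set: R] (@GRing.inv R).
Proof.
have -> : [set: R] = ~` [set 0] `|` [set 0] by rewrite setUC setUCr.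
apply/measurable_funU => //; first exact: measurableC.
split.
  apply: open_continuous_measurable_fun.
    by apply/closed_openC/accessible_closed_set1/hausdorff_accessible/Rhausdorff.
  by move=> x; rewrite inE /= => /eqP x0; exact: inv_continuous.
move=> _ Y mY; have [Y0|Y0] := pselect (Y 0^-1).
  by rewrite (_ : _ `&` _ = [set 0]) //; apply/seteqP; split => [z [->]//|z ->].
by rewrite (_ : _ `&` _ = set0) //; apply/seteqP; split => [z [/= ->]//|].
Qed.

Lemma measurable_fmob (B : 'M[R]_2) : measurable_fun [set: R] (fmob B).
Proof.
apply: measurable_funM; first by apply: measurable_funD => //; apply: measurable_funM.
apply: measurableT_comp; first exact: measurable_inv.
by apply: measurable_funD => //; apply: measurable_funM.
Qed.

Lemma measurable_artanh : measurable_fun [set: R] (@artanh R).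
Proof.
apply: measurable_funM => //; apply: measurableT_comp; first exact: measurable_ln.
apply: measurable_funM; first exact: measurable_funD.
by apply: measurableT_comp; [exact: measurable_inv|exact: measurable_funB].
Qed.

Lemma measurable_dhyp : measurable_fun [set: R * R] (fun z => (dhyp z.1 z.2)%:E).
Proof.
apply/measurable_EFinP; apply: measurable_funM => //; apply: measurableT_comp => //.
by apply: measurable_funB; apply: measurableT_comp measurable_artanh _.
Qed.

End measurability.

HB.instance Definition _ (R : realType) (B : 'M[R]_2) :=
  isMeasurableFun.Build _ _ R R (fmob B) (measurable_fmob B).

Definition map_pair {T U : Type} (f : T -> U) (z : T * T) : U * U := (f z.1, f z.2).

Section map_pair_measurable.
Context {d d' : measure_display} {T : measurableType d} {U : measurableType d'}.
Variable f : {mfun T >-> U}.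

Lemma measurable_map_pair : measurable_fun [set: T * T] (map_pair f).
Proof.
by apply: measurable_fun_pair; apply: measurableT_comp => //; exact: measurable_funPT.
Qed.

HB.instance Definition _ := isMeasurableFun.Build _ _ _ _ (map_pair f) measurable_map_pair.

End map_pair_measurable.

Section measure_sum_seq.
Context {d} {T : measurableType d} {R : realType} {I : Type}.
Variable m : I -> {measure set T -> \bar R}.

Fixpoint msum_seq (s : seq I) : {measure set T -> \bar R} :=
  if s is i :: s' then measure_add (m i) (msum_seq s') else mzero.

Lemma msum_seqE s A : msum_seq s A = (\sum_(i <- s) m i A)%E.
Proof.
elim: s => [|i s IH]; rewrite ?big_nil ?big_cons // -IH; exact: measure_addE.
Qed.

Lemma ge0_integral_msum_seq s (f : T -> \bar R) :
  measurable_fun [set: T] f -> (forall x, 0 <= f x)%E ->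
  (\int[msum_seq s]_x f x = \sum_(i <- s) \int[m i]_x f x)%E.
Proof.
move=> mf f0; elim: s => [|i s IH] /=; first by rewrite big_nil integral_measure_zero.
by rewrite ge0_integral_measure_add // big_cons IH.
Qed.

End measure_sum_seq.

Record prob_weights (R : numDomainType) (I : finType) := ProbWeights {
  weight :> I -> R;
  weight_ge0 : forall i, 0 <= weight i;
  weight_sum1 : \sum_i weight i = 1 }.
Arguments ProbWeights {R I}.
Arguments weight_ge0 {R I}.
Arguments weight_sum1 {R I}.

Section mixture.
Context {d} {T : measurableType d} {R : realType} {I : finType}.
Variables (w : prob_weights R I) (mu : I -> probability T R).

Definition mixture : set T -> \bar R :=
  msum_seq (fun i => mscale (NngNum (weight_ge0 w i)) (mu i)) (index_enum I).

HB.instance Definition _ := Measure.on mixture.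

Lemma mixtureE A : mixture A = (\sum_i (w i)%:E * mu i A)%E.
Proof. exact: msum_seqE. Qed.

Let mixture_setT : mixture [set: T] = 1%E.
Proof.
rewrite mixtureE; under eq_bigr do rewrite probability_setT mule1.
by rewrite sumEFin weight_sum1.
Qed.

HB.instance Definition _ := Measure_isProbability.Build _ _ _ mixture mixture_setT.

Lemma ge0_integral_mixture (f : T -> \bar R) :
  measurable_fun [set: T] f -> (forall x, 0 <= f x)%E ->
  (\int[mixture]_x f x = \sum_i (w i)%:E * \int[mu i]_x f x)%E.
Proof.
move=> mf f0; rewrite ge0_integral_msum_seq //.
by apply: eq_bigr => i _; rewrite ge0_integral_mscale.
Qed.

End mixture.

Lemma prob_ae {d : measure_display} {T : measurableType d} {R : realType}
    {mu : probability T R} {D : set T} :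
  measurable D -> mu D = 1%E -> {ae mu, forall x, D x}.
Proof.
move=> mD muD; exists (~` D); split => //; first exact: measurableC.
by rewrite probability_setC // muD subee.
Qed.

Section couplings.
Context {R : realType}.
Implicit Types (mu nu : probability R R) (g : probability (R * R)%type R).

Lemma coupling_mixture (I : finType) (w : prob_weights R I)
    (mu nu : I -> probability R R) (g : I -> probability (R * R)%type R) :
  (forall i, coupling (mu i) (nu i) (g i)) ->
  coupling (mixture w mu) (mixture w nu) (mixture w g).
Proof.
move=> cg; split => A mA; rewrite -[LHS]/(mixture w g _) -[RHS]/(mixture w _ A) !mixtureE.
  by apply: eq_bigr => i _; rewrite (cg i).1.
by apply: eq_bigr => i _; rewrite (cg i).2.
Qed.

Lemma coupling_distribution {f : {mfun R >-> R}} {mu nu g} : coupling mu nu g ->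
  coupling (distribution mu f) (distribution nu f) (distribution g (map_pair f)).
Proof.
move=> [c1 c2]; split => A mA.
  exact: c1 _ (measurable_funPTI f mA).
exact: c2 _ (measurable_funPTI f mA).
Qed.

Lemma coupling_ae_fst {mu nu g} {D : set R} : coupling mu nu g ->
  {ae mu, forall x, D x} -> {ae g, forall z, D z.1}.
Proof.
move=> [c1 _] [N [mN muN DN]]; exists (fst @^-1` N); split.
- by rewrite -[X in measurable X]setTI; exact: measurable_fst.
- by rewrite c1.
- by move=> z /DN.
Qed.

Lemma coupling_ae_snd {mu nu g} {D : set R} : coupling mu nu g ->
  {ae nu, forall x, D x} -> {ae g, forall z, D z.2}.
Proof.
move=> [_ c2] [N [mN nuN DN]]; exists (snd @^-1` N); split.
- by rewrite -[X in measurable X]setTI; exact: measurable_snd.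
- by rewrite c2.
- by move=> z /DN.
Qed.

Lemma W1_ge0 mu nu : (0 <= W1 mu nu)%E.
Proof.
apply: le_ereal_inf_tmp => _ [g _ <-]; apply: integral_ge0 => z _.
by rewrite lee_fin dhyp_ge0.
Qed.

Lemma W1_le_integral {mu nu g} : coupling mu nu g ->
  (W1 mu nu <= \int[g]_z (dhyp z.1 z.2)%:E)%E.
Proof. by move=> cg; apply: ereal_inf_lbound; exists g. Qed.

Lemma W1_adherent {mu nu} {e : R} : W1 mu nu \is a fin_num -> 0 < e ->
  exists2 g, coupling mu nu g & (\int[g]_z (dhyp z.1 z.2)%:E < W1 mu nu + e%:E)%E.
Proof.
by move=> fin e0; have [_ [g cg <-] lt] := lb_ereal_inf_adherent e0 fin; exists g.
Qed.

Lemma W1_congr {mu nu mu' nu'} :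
  (mu : set R -> \bar R) = mu' -> (nu : set R -> \bar R) = nu' -> W1 mu nu = W1 mu' nu'.
Proof. by rewrite /W1 /coupling => -> ->. Qed.

End couplings.

Section moebius_pushforward.
Context {R : realType}.
Variables (B : 'M[R]_2) (rho : R).
Hypotheses (B_gt0 : forall i j, 0 < B i j) (rho0 : 0 < rho) (rho1 : rho < 1).
Hypothesis fmob_bound : forall x, -1 <= x <= 1 -> -rho <= fmob B x <= rho.

Let fmob_Iopen x : Iopen x -> -rho <= fmob B x <= rho.
Proof. by rewrite /Iopen /= in_itv /= => /andP[x1 x2]; apply: fmob_bound; lra. Qed.

Lemma distribution_fmob_Iopen (mu : probability R R) :
  mu (@Iopen R) = 1%E -> distribution mu (fmob B) (@Iopen R) = 1%E.
Proof.
move=> muI; apply/eqP; rewrite eq_le probability_le1 /=; last exact: measurable_itv.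
rewrite -[leRHS]/(mu (fmob B @^-1` @Iopen R)) -{1}muI.
apply: le_measure; rewrite ?inE.
- exact: measurable_itv.
- by apply: measurable_funPTI; exact: measurable_itv.
move=> x /fmob_Iopen /andP[f1 f2]; rewrite /preimage /Iopen /= in_itv /=.
by rewrite (lt_le_trans _ f1) ?ltrN2 ?(le_lt_trans f2 rho1).
Qed.

Lemma integral_dhyp0_fmob_le (mu : probability R R) : mu (@Iopen R) = 1%E ->
  (\int[mu]_x (dhyp (fmob B x) 0)%:E <= (ln ((1 + rho) / (1 - rho)))%:E)%E.
Proof.
move=> muI; set K := ln _.
have K0 : 0 <= K.
  have := @dhyp0_le R rho 0 rho1; rewrite /dhyp subrr normr0 mulr0.
  by apply; rewrite oppr_le0 andbb ltW.
rewrite -[leRHS]mule1 -(probability_setT mu) -integral_cst //.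
apply: ae_ge0_le_integral => //.
- by move=> x _; rewrite lee_fin dhyp_ge0.
- have := measurable_fun_pair (measurable_fmob B) (measurable_cst (0 : R)).
  exact: measurableT_comp measurable_dhyp.
- move: (prob_ae (measurable_itv _) muI); apply: filterS => x /fmob_Iopen Hx _.
  by rewrite lee_fin dhyp0_le.
Qed.

Lemma integral_dhyp_fmob_le (g : probability (R * R)%type R) :
  {ae g, forall z, Iopen z.1 /\ Iopen z.2} ->
  (\int[distribution g (map_pair (fmob B))]_z (dhyp z.1 z.2)%:E
     <= rho%:E * \int[g]_z (dhyp z.1 z.2)%:E)%E.
Proof.
have cost_ge0 (z : R * R) : (0 <= (dhyp z.1 z.2)%:E)%E by rewrite lee_fin dhyp_ge0.
have mdhyp := @measurable_dhyp R.
have rho_ge0 : (0 <= rho%:E)%E by rewrite lee_fin ltW.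
move=> gI; rewrite ge0_integral_distribution // -ge0_integralZl //.
apply: ae_ge0_le_integral => //.
- by move=> z _; exact: cost_ge0.
- exact: measurableT_comp mdhyp (measurable_map_pair _).
- by move=> z _; rewrite mule_ge0.
- exact: measurable_funeM.
move: gI; apply: filterS => -[x y] [/= Ix Iy] _.
rewrite /= -EFinM lee_fin dhyp_fmob_le // ?ltW //.
all: by move: Ix Iy; rewrite /Iopen /= !in_itv.
Qed.

End moebius_pushforward.

Lemma Wc_pinfty {R : realType} {C : finType} {p : C -> R} {eta zeta : C -> probability R R} r :
  (forall r, 0 < p r) -> W1 (eta r) (zeta r) = +oo%E -> Wc p eta zeta = +oo%E.
Proof.
move=> p_gt0 Winf; rewrite /Wc (bigD1 r) //= Winf gt0_muley ?lte_fin // addye //.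
rewrite gt_eqF // (@lt_le_trans _ _ 0%E) ?ltNy0 // sume_ge0 // => i _.
by rewrite mule_ge0 ?W1_ge0 // lee_fin ltW.
Qed.

Section transfer_operator.
Context {R : realType} {C : finType}.
Variables (Q : C -> C -> R) (pi : C -> R) (B : C -> 'M[R]_2) (rho : R).
Hypotheses (Q_ge0 : forall r r', 0 <= Q r r') (Q_sum1 : forall r, \sum_r' Q r r' = 1).
Hypotheses (pi_gt0 : forall r, 0 < pi r) (pi_sum1 : \sum_r pi r = 1).
Hypothesis pi_stationary : forall r', \sum_r pi r * Q r r' = pi r'.
Hypotheses (B_gt0 : forall r i j, 0 < B r i j) (rho0 : 0 < rho) (rho1 : rho < 1).
Hypothesis fmob_bound : forall r x, -1 <= x <= 1 -> -rho <= fmob (B r) x <= rho.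

Lemma backward_weight_ge0 r' r : 0 <= pi r * Q r r' / pi r'.
Proof. by rewrite divr_ge0 ?mulr_ge0 ?Q_ge0 ?(ltW (pi_gt0 _)). Qed.

Lemma backward_weight_sum1 r' : \sum_r pi r * Q r r' / pi r' = 1.
Proof. by rewrite -mulr_suml pi_stationary divff // gt_eqF. Qed.

Definition backward_weights r' : prob_weights R C :=
  ProbWeights _ (backward_weight_ge0 r') (backward_weight_sum1 r').

Definition transfer (eta : C -> probability R R) r' : probability R R :=
  mixture (backward_weights r') (fun r => distribution (eta r) (fmob (B r))).

Lemma transferE eta r' : (transfer eta r' : set R -> \bar R) = Hset pi Q B eta r'.
Proof. by apply/funext => A; rewrite -[LHS]/(mixture _ _ A) mixtureE. Qed.

Lemma P1C_transfer eta : P1C eta -> P1C (transfer eta).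
Proof.
move=> Peta r'; split.
  rewrite -[LHS]/(mixture _ _ _) mixtureE /=.
  under eq_bigr do rewrite (distribution_fmob_Iopen _ _ rho1 (fmob_bound _)) ?(Peta _).1 // mule1.
  by rewrite sumEFin backward_weight_sum1.
have cost_ge0 (x : R) : (0 <= (dhyp x 0)%:E)%E by rewrite lee_fin dhyp_ge0.
have mdhyp : measurable_fun [set: R] (fun x => (dhyp x 0)%:E).
  have := measurable_fun_pair (@measurable_id _ R setT) (measurable_cst (0 : R)).
  exact: measurableT_comp measurable_dhyp.
rewrite ge0_integral_mixture //.
apply: (@le_lt_trans _ _ (\sum_r (backward_weights r' r)%:E * (ln ((1 + rho) / (1 - rho)))%:E)%E).
  apply: lee_sum => r _; apply: lee_wpmul2l; first by rewrite lee_fin weight_ge0.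
  rewrite ge0_integral_distribution //.
  exact: integral_dhyp0_fmob_le _ _ rho0 rho1 (fmob_bound r) _ (Peta r).1.
by under eq_bigr do rewrite -EFinM; rewrite sumEFin ltry.
Qed.

Lemma W1_transfer_le eta zeta (g : C -> probability (R * R)%type R) r' :
  P1C eta -> P1C zeta -> (forall r, coupling (eta r) (zeta r) (g r)) ->
  (W1 (transfer eta r') (transfer zeta r') <=
   \sum_r (backward_weights r' r)%:E * (rho%:E * \int[g r]_z (dhyp z.1 z.2)%:E))%E.
Proof.
move=> Peta Pzeta cg.
have cost_ge0 (z : R * R) : (0 <= (dhyp z.1 z.2)%:E)%E by rewrite lee_fin dhyp_ge0.
pose G := mixture (backward_weights r') (fun r => distribution (g r) (map_pair (fmob (B r)))).
have cG : coupling (transfer eta r') (transfer zeta r') G.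
  by apply: coupling_mixture => r; exact: coupling_distribution.
apply: (le_trans (W1_le_integral cG)).
rewrite ge0_integral_mixture //; last exact: measurable_dhyp.
apply: lee_sum => r _; apply: lee_wpmul2l; first by rewrite lee_fin weight_ge0.
apply: integral_dhyp_fmob_le (B_gt0 r) rho0 rho1 (fmob_bound r) _ _.
have Ieta := coupling_ae_fst (cg r) (prob_ae (measurable_itv _) (Peta r).1).
have Izeta := coupling_ae_snd (cg r) (prob_ae (measurable_itv _) (Pzeta r).1).
exact: filterS2 Ieta Izeta.
Qed.

Lemma sum_backward_weights (F : C -> \bar R) : (forall r, 0 <= F r)%E ->
  (\sum_r' (pi r')%:E * \sum_r (backward_weights r' r)%:E * F r = \sum_r (pi r)%:E * F r)%E.
Proof.
move=> F_ge0.
have QF_ge0 r r' : (0 <= (pi r * Q r r')%:E * F r)%E.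
  by rewrite mule_ge0 // lee_fin mulr_ge0 ?Q_ge0 ?ltW.
transitivity (\sum_r' \sum_r (pi r * Q r r')%:E * F r)%E.
  apply: eq_bigr => r' _; rewrite ge0_sume_distrr; last first.
    by move=> r _; rewrite mule_ge0 // lee_fin weight_ge0.
  apply: eq_bigr => r _; rewrite muleA -EFinM /=.
  by congr (_%:E * _)%E; field; rewrite gt_eqF.
rewrite exchange_big; apply: eq_bigr => r _.
rewrite -ge0_sume_distrl; last by move=> r' _; rewrite lee_fin mulr_ge0 ?Q_ge0 ?ltW.
by rewrite sumEFin -mulr_sumr Q_sum1 mulr1.
Qed.

Lemma Wc_transfer_le_couplings eta zeta (g : C -> probability (R * R)%type R) :
  P1C eta -> P1C zeta -> (forall r, coupling (eta r) (zeta r) (g r)) ->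
  (Wc pi (transfer eta) (transfer zeta) <=
   \sum_r (pi r)%:E * (rho%:E * \int[g r]_z (dhyp z.1 z.2)%:E))%E.
Proof.
move=> Peta Pzeta cg; rewrite -sum_backward_weights; last first.
  move=> r; rewrite mule_ge0 ?lee_fin ?(ltW rho0) // integral_ge0 // => z _.
  by rewrite lee_fin dhyp_ge0.
apply: lee_sum => r' _; apply: lee_wpmul2l; first by rewrite lee_fin ltW.
exact: W1_transfer_le.
Qed.

Lemma Wc_transfer_le eta zeta : P1C eta -> P1C zeta ->
  (Wc pi (transfer eta) (transfer zeta) <= rho%:E * Wc pi eta zeta)%E.
Proof.
move=> Peta Pzeta.
have [[r Winf]|Wfin] := pselect (exists r, W1 (eta r) (zeta r) = +oo%E).
  by rewrite (Wc_pinfty r pi_gt0 Winf) gt0_muley ?lte_fin // leey.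
pose w r := fine (W1 (eta r) (zeta r)).
have Ww r : W1 (eta r) (zeta r) = (w r)%:E.
  rewrite fineK // ge0_fin_numE ?W1_ge0 // ltey.
  by apply/eqP => W1r; apply: Wfin; exists r.
apply/lee_addgt0Pr => e e0.
have /choice[g gP] : forall r, exists g, coupling (eta r) (zeta r) g /\
    (\int[g]_z (dhyp z.1 z.2)%:E < (w r + e)%:E)%E.
  move=> r; have W_fin : W1 (eta r) (zeta r) \is a fin_num by rewrite Ww.
  by have [g cg lt] := W1_adherent W_fin e0; exists g; rewrite EFinD -Ww.
apply: (le_trans (Wc_transfer_le_couplings _ _ _ Peta Pzeta (fun r => (gP r).1))).
apply: le_trans (_ : _ <= \sum_r (pi r * (rho * (w r + e)))%:E)%E _.
  apply: lee_sum => r _; rewrite !EFinM.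
  do 2 (apply: lee_wpmul2l; first by rewrite lee_fin ltW).
  exact: ltW (gP r).2.
rewrite /Wc; under [X in (_ <= _ * X + _)%E]eq_bigr do rewrite Ww -EFinM.
rewrite !sumEFin -EFinM -EFinD lee_fin.
have -> : \sum_r pi r * (rho * (w r + e)) = rho * \sum_r pi r * w r + rho * e.
  rewrite mulr_sumr -[rho * e]mulr1 -pi_sum1 mulr_sumr -big_split /=.
  by apply: eq_bigr => r _; ring.
by rewrite lerD2l ger_pMl // ltW.
Qed.

End transfer_operator.

Theorem proposition3p4 (R : realType) (C : finType)
  (Q : C -> C -> R) (pi : C -> R) (B : C -> 'M[R]_2) (rho : R)
  (* Q restricted to C: stochastic, irreducible and aperiodic (primitive) *)
  (HQ0 : forall r r', 0 <= Q r r')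
  (HQ1 : forall r, \sum_(r' : C) Q r r' = 1)
  (HQprim : exists n : nat, forall r r', 0 < kpow Q n r r')
  (* pi: the (positive) stationary probability vector *)
  (Hpi0 : forall r, 0 < pi r)
  (Hpi1 : \sum_(r : C) pi r = 1)
  (Hpistat : forall r', \sum_(r : C) pi r * Q r r' = pi r')
  (* B_r entrywise positive *)
  (HB : forall r i j, 0 < B r i j)
  (* 0 < rho < 1 and f_r([-1,1]) in [-rho,rho] *)
  (Hrho : 0 < rho < 1)
  (Hf : forall r x, -1 <= x <= 1 -> -rho <= fmob (B r) x <= rho) :
  (forall eta : C -> probability R R, P1C eta ->
     exists eta' : C -> probability R R,
       P1C eta' /\ forall r', (eta' r' : set R -> \bar R) = Hset pi Q B eta r') /\
  (forall eta zeta eta' zeta' : C -> probability R R,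
     P1C eta -> P1C zeta ->
     (forall r', (eta' r' : set R -> \bar R) = Hset pi Q B eta r') ->
     (forall r', (zeta' r' : set R -> \bar R) = Hset pi Q B zeta r') ->
     (Wc pi eta' zeta' <= rho%:E * Wc pi eta zeta)%E).
Proof.
(* The contraction does not use the primitivity [HQprim] of [Q]. *)
case/andP: Hrho => rho0 rho1.
pose T := transfer Q pi B HQ0 Hpi0 Hpistat.
have TE eta r' : (T eta r' : set R -> \bar R) = Hset pi Q B eta r'.
  exact: transferE.
split=> [eta Peta|eta zeta eta' zeta' Peta Pzeta Heta Hzeta].
  exists (T eta); split=> //.
  by apply: (P1C_transfer _ _ _ rho).
have -> : Wc pi eta' zeta' = Wc pi (T eta) (T zeta).
  apply: eq_bigr => r' _; congr (_ * _)%E.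
  by apply: W1_congr; rewrite ?Heta ?Hzeta TE.
by apply: (Wc_transfer_le _ _ _ rho).
Qed.
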